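(* The set of points $x\in[0,1]$ whose forward orbit $\{R^n(x):n\ge0\}$ is dense in $[0,1]$ is uncountable and dense in $[0,1]$.
   Context: Define $\rho$ on binary words: for $b=b_1b_2\dots$, $\rho(b)$ is obtained by deleting every digit $b_n=0$ and replacing every $b_n=1$ by $0$ if $n$ is odd and by $1$ if $n$ is even. For $x\in(0,1]$ let $\beta(x)$ be the unique binary expansion of $x$ with infinitely many $1$'s. Define $R:[0,1]\to[0,1]$ by $R(0)=2/3$ and, for $x\in(0,1]$, $R(x)=\sum_{n\ge1}c_n2^{-n}$ where $c=\rho(\beta(x))$. *)

From Stdlib Require Import Reals Lra ClassicalEpsilon.
From Coquelicot Require Import Coquelicot.
Open Scope R_scope.

(* Infinite binary words b = b_1 b_2 ... are represented as b : nat -> bool,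
   with b_{k+1} := b k (0-based indexing). *)

Definition bin_term (b : nat -> bool) (k : nat) : R :=
  if b k then / 2 ^ (S k) else 0.

Definition inf_many_ones (b : nat -> bool) : Prop :=
  forall N : nat, exists k : nat, (N <= k)%nat /\ b k = true.

(* beta(x): the (unique, for x in (0,1]) binary expansion of x with
   infinitely many 1's; chosen by Hilbert's epsilon. *)
Definition beta (x : R) : nat -> bool :=
  epsilon (inhabits (fun _ : nat => false))
    (fun b => inf_many_ones b /\ is_series (bin_term b) x).

Fixpoint count_ones (b : nat -> bool) (m : nat) : nat :=
  match m with
  | O => O
  | S m' => (count_ones b m' + (if b m' then 1 else 0))%nat
  end.

(* rho(b): delete the 0 digits; the (n+1)-th surviving digit comes from
   the (n+1)-th 1 of b, located at (1-based) position p+1 where b p = true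
   and exactly n ones precede it; it is replaced by 0 if p+1 is odd and by 1
   if p+1 is even, i.e. by 1 iff p (0-based) is odd. *)
Definition rho (b : nat -> bool) : nat -> bool :=
  fun n => Nat.odd (epsilon (inhabits O)
                      (fun p => b p = true /\ count_ones b p = n)).

(* The map R of the paper (named Rmap to avoid clashing with the type R).
   Values outside [0,1] are irrelevant. *)
Definition Rmap (x : R) : R :=
  if Req_EM_T x 0 then 2 / 3 else Series (bin_term (rho (beta x))).

Definition orbit_dense (x : R) : Prop :=
  forall y : R, 0 <= y <= 1 -> forall eps : R, 0 < eps ->
    exists n : nat, Rabs (Nat.iter n Rmap x - y) < eps.

(* Points are encoded by infinite binary words c with infinitely many 1's via
   val c = sum_k c_k 2^{-(k+1)}.  On such points R is the digit map rho,
   R (val c) = val (rho c), and val is injective (via the greedy expansion,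
   beta inverts val).  rho acts on a finite prefix u by a finite-word map rhol,
   which empties u within 2|u| steps, and rho has explicit preimages built by
   "pairing" digits; together they give, for a finite word u and any infinite
   word c, a word preimage n u c with R^n (val (u ++ preimage n u c)) = val c
   for n = 2|u|.  Nesting these for nonempty words w_0, w_1, ...
   yields words Z_j = w_j ++ preimage (2|w_j|) w_j Z_{j+1}, so the orbit of
   val Z_0 passes through every val Z_j, whose expansion starts with w_j.
   Letting the w_j run through all finite words, each followed by a free bit
   s_j, gives points with dense orbit that may start with any prefix (density)
   and that determine s (uncountability, by Cantor's diagonal argument). *)

From Stdlib Require Import Reals Lra Lia ClassicalEpsilon Classical FunctionalExtensionality List.
From Coquelicot Require Import Coquelicot.
Import ListNotations.
Open Scope R_scope.

Definition val (c : nat -> bool) : R := Series (bin_term c).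

Definition wcons (b : bool) (c : nat -> bool) : nat -> bool :=
  fun n => match n with O => b | S n => c n end.

Definition shift (c : nat -> bool) : nat -> bool := fun n => c (S n).

Definition b2R (b : bool) : R := if b then 1 else 0.

Lemma pow2_inv_small eps : 0 < eps -> exists K, / 2 ^ K < eps.
Proof.
  intros Heps.
  assert (Habs : Rabs (/ 2) < 1) by (rewrite Rabs_pos_eq; lra).
  destruct (pow_lt_1_zero (/ 2) Habs eps Heps) as [K HK].
  exists K. specialize (HK K (le_n _)).
  rewrite pow_inv, Rabs_pos_eq in HK; [exact HK |].
  left; apply Rinv_0_lt_compat, pow_lt; lra.
Qed.

Lemma pow2_inv_below_zero a : (forall K, Rabs a <= / 2 ^ K) -> a = 0.
Proof.
  intros Ha. destruct (Req_dec a 0) as [E | E]; [exact E | exfalso].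
  destruct (pow2_inv_small (Rabs a)) as [K HK]; [apply Rabs_pos_lt; exact E |].
  specialize (Ha K). lra.
Qed.

Lemma geometric_half : is_series (fun k => / 2 ^ S k) 1.
Proof.
  assert (Habs : Rabs (/ 2) < 1) by (rewrite Rabs_pos_eq; lra).
  assert (H := is_series_scal_l (/ 2) _ _ (is_series_geom (/ 2) Habs)).
  replace 1 with (scal (/ 2) (/ (1 - / 2))) by (unfold scal; simpl; unfold mult; simpl; field).
  eapply is_series_ext; [| exact H].
  intros n; unfold scal; simpl; unfold mult; simpl.
  rewrite pow_inv, Rinv_mult. reflexivity.
Qed.

Lemma bin_term_bound c k : 0 <= bin_term c k <= / 2 ^ S k.
Proof.
  unfold bin_term. assert (0 < / 2 ^ S k) by (apply Rinv_0_lt_compat, pow_lt; lra).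
  destruct (c k); lra.
Qed.

Lemma bin_ex c : ex_series (bin_term c).
Proof.
  apply (@ex_series_le R_AbsRing R_CompleteNormedModule _ (fun k => / 2 ^ S k));
    [| exists 1; exact geometric_half].
  intros n. destruct (bin_term_bound c n) as [H0 H1].
  unfold norm; simpl; unfold abs; simpl. rewrite Rabs_pos_eq by lra. exact H1.
Qed.

Lemma val_bounds c : 0 <= val c <= 1.
Proof.
  unfold val. split.
  - replace 0 with (Series (fun n => 0 * bin_term c n)) by (rewrite Series_scal_l; lra).
    apply Series_le; [| apply bin_ex]. intros n. destruct (bin_term_bound c n) as [H0 H1]. lra.
  - rewrite <- (is_series_unique _ _ geometric_half).
    apply Series_le; [apply bin_term_bound | exists 1; exact geometric_half].
Qed.

Lemma val_wcons b c : val (wcons b c) = (b2R b + val c) / 2.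
Proof.
  unfold val. rewrite Series_incr_1 by apply bin_ex.
  rewrite (Series_ext _ (fun k => bin_term c k * / 2)).
  - rewrite Series_scal_r. unfold bin_term, b2R; simpl. destruct b; field.
  - intros n. unfold bin_term; simpl. destruct (c n); [rewrite Rinv_mult |]; lra.
Qed.

Lemma val_head c : val c = (b2R (c O) + val (shift c)) / 2.
Proof.
  rewrite <- val_wcons. f_equal. apply functional_extensionality. now intros [|n].
Qed.

Lemma val_agree K : forall c d, (forall i, (i < K)%nat -> c i = d i) ->
  Rabs (val c - val d) <= / 2 ^ K.
Proof.
  induction K as [|K IH]; intros c d Hcd.
  - simpl. rewrite Rinv_1. destruct (val_bounds c), (val_bounds d). apply Rabs_le; lra.
  - rewrite (val_head c), (val_head d), (Hcd O) by lia.
    specialize (IH (shift c) (shift d) (fun i Hi => Hcd (S i) ltac:(lia))).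
    replace ((b2R (d O) + val (shift c)) / 2 - (b2R (d O) + val (shift d)) / 2)
      with ((val (shift c) - val (shift d)) * / 2) by field.
    rewrite Rabs_mult, (Rabs_pos_eq (/ 2)) by lra.
    simpl. rewrite Rinv_mult. lra.
Qed.

Lemma val_pos k : forall c, c k = true -> 0 < val c.
Proof.
  induction k as [|k IH]; intros c Hc; rewrite val_head.
  - rewrite Hc. unfold b2R. destruct (val_bounds (shift c)). lra.
  - specialize (IH (shift c) Hc). destruct (c O); unfold b2R; lra.
Qed.

Lemma inf_many_ones_shift c : inf_many_ones c -> inf_many_ones (shift c).
Proof.
  intros Hc N. destruct (Hc (S N)) as [[|k] [Hk Hck]]; [lia |].
  exists k. split; [lia | exact Hck].
Qed.

(* A word starting with 1 and having another 1 later has value > 1/2;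
   one starting with 0 has value <= 1/2. *)
Lemma val_head_differs c d :
  c O = true -> d O = false -> inf_many_ones c -> val d < val c.
Proof.
  intros Hc Hd Hinf. destruct (Hinf 1%nat) as [[|k] [Hk Hck]]; [lia |].
  assert (0 < val (shift c)) by (apply (val_pos k); exact Hck).
  rewrite (val_head c), (val_head d), Hc, Hd. unfold b2R.
  destruct (val_bounds (shift d)). lra.
Qed.

Lemma val_eq_head c d :
  inf_many_ones c -> inf_many_ones d -> val c = val d -> c O = d O.
Proof.
  intros Hc Hd Heq. destruct (c O) eqn:Ec, (d O) eqn:Ed; try reflexivity.
  - pose proof (val_head_differs c d Ec Ed Hc). lra.
  - pose proof (val_head_differs d c Ed Ec Hd). lra.
Qed.

Lemma val_inj c d : inf_many_ones c -> inf_many_ones d -> val c = val d -> c = d.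
Proof.
  intros Hc Hd Heq. apply functional_extensionality. intros k.
  revert c d Hc Hd Heq. induction k as [|k IH]; intros c d Hc Hd Heq.
  - apply val_eq_head; assumption.
  - apply (IH (shift c) (shift d)); try apply inf_many_ones_shift; try assumption.
    pose proof (val_eq_head c d Hc Hd Heq) as E0.
    rewrite (val_head c), (val_head d), E0 in Heq. lra.
Qed.

(* The greedy (doubling map) expansion of x in [0,1]: at each step the
   remainder r is doubled, emitting the digit 1 exactly when 2 r > 1.
   Choosing the strict test makes the expansion have infinitely many 1's. *)
Definition doubling (r : R) : R := if Rlt_dec 1 (2 * r) then 2 * r - 1 else 2 * r.

Definition greedy (x : R) (k : nat) : bool :=
  if Rlt_dec 1 (2 * Nat.iter k doubling x) then true else false.

Lemma greedy_shift x : shift (greedy x) = greedy (doubling x).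
Proof.
  apply functional_extensionality; intros k. unfold shift, greedy.
  rewrite Nat.iter_succ_r. reflexivity.
Qed.

Lemma doubling_range x : 0 <= x <= 1 -> 0 <= doubling x <= 1.
Proof. unfold doubling; destruct (Rlt_dec 1 (2 * x)); lra. Qed.

Lemma doubling_iter_range x k : 0 < x <= 1 -> 0 < Nat.iter k doubling x <= 1.
Proof.
  intros Hx; induction k as [|k IH]; simpl; [exact Hx |].
  revert IH. generalize (Nat.iter k doubling x). intros r Hr.
  unfold doubling; destruct (Rlt_dec 1 (2 * r)); lra.
Qed.

(* The greedy digits are a binary expansion: val (greedy x) = x, since the
   error is halved with each digit. *)
Lemma greedy_val x : 0 <= x <= 1 -> val (greedy x) = x.
Proof.
  intros Hx. enough (val (greedy x) - x = 0) by lra.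
  apply pow2_inv_below_zero. intros K. revert x Hx.
  induction K as [|K IH]; intros x Hx.
  - simpl. rewrite Rinv_1. destruct (val_bounds (greedy x)). apply Rabs_le; lra.
  - rewrite val_head, greedy_shift.
    specialize (IH (doubling x) (doubling_range x Hx)).
    replace ((b2R (greedy x O) + val (greedy (doubling x))) / 2 - x)
      with ((val (greedy (doubling x)) - doubling x) * / 2)
      by (unfold greedy, doubling, b2R; simpl; destruct (Rlt_dec 1 (2 * x)); field).
    rewrite Rabs_mult, (Rabs_pos_eq (/ 2)) by lra.
    simpl. rewrite Rinv_mult. lra.
Qed.

(* If the greedy digits vanished from position N on, the remainder would be
   doubled forever while staying in (0,1]. *)
Lemma greedy_inf_many_ones x : 0 < x <= 1 -> inf_many_ones (greedy x).
Proof.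
  intros Hx N. apply NNPP; intros Hnone.
  assert (Hdouble : forall j, Nat.iter (j + N) doubling x = 2 ^ j * Nat.iter N doubling x).
  { induction j as [|j IH]; simpl; [lra |].
    unfold doubling at 1. destruct (Rlt_dec 1 (2 * Nat.iter (j + N) doubling x)) as [Hlt |].
    - exfalso. apply Hnone. exists (j + N)%nat. split; [lia |].
      unfold greedy. destruct (Rlt_dec _ _); [reflexivity | contradiction].
    - rewrite IH. ring. }
  destruct (doubling_iter_range x N Hx) as [Hpos _].
  destruct (pow2_inv_small _ Hpos) as [M HM].
  destruct (doubling_iter_range x (M + N) Hx) as [_ Hle].
  rewrite Hdouble in Hle.
  assert (H2 : 0 < 2 ^ M) by (apply pow_lt; lra).
  apply (Rmult_lt_compat_l (2 ^ M)) in HM; [| exact H2].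
  rewrite Rinv_r in HM by lra. lra.
Qed.

Lemma beta_val c : inf_many_ones c -> beta (val c) = c.
Proof.
  intros Hc. destruct (Hc O) as [k [_ Hk]].
  pose proof (val_pos k c Hk). destruct (val_bounds c).
  assert (Hspec : inf_many_ones (beta (val c)) /\ is_series (bin_term (beta (val c))) (val c)).
  { unfold beta. apply epsilon_spec. exists (greedy (val c)).
    split; [apply greedy_inf_many_ones; lra |].
    rewrite <- (greedy_val (val c)) at 2 by lra. apply Series_correct, bin_ex. }
  destruct Hspec as [Hinf Hsum].
  apply val_inj; [exact Hinf | exact Hc |]. unfold val at 1. apply is_series_unique, Hsum.
Qed.

Lemma Rmap_val c : inf_many_ones c -> Rmap (val c) = val (rho c).
Proof.
  intros Hc. destruct (Hc O) as [k [_ Hk]]. pose proof (val_pos k c Hk).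
  unfold Rmap. destruct (Req_EM_T (val c) 0); [lra |]. rewrite beta_val by exact Hc.
  reflexivity.
Qed.

Section RhoCombinatorics.
Local Close Scope R_scope.

Definition bool_nat (b : bool) : nat := if b then 1 else 0.

Lemma count_ones_S b p : count_ones b (S p) = count_ones b p + bool_nat (b p).
Proof. reflexivity. Qed.

Lemma count_ones_mono b p q : p <= q -> count_ones b p <= count_ones b q.
Proof. induction 1; [lia |]. rewrite count_ones_S. lia. Qed.

Lemma rho_spec b p n : b p = true -> count_ones b p = n -> rho b n = Nat.odd p.
Proof.
  intros Hp Hcount. unfold rho.
  destruct (epsilon_spec (inhabits O) (fun q => b q = true /\ count_ones b q = n)
              (ex_intro _ p (conj Hp Hcount))) as [Hq Hqcount].
  generalize dependent (epsilon (inhabits O) (fun q => b q = true /\ count_ones b q = n)).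
  intros q Hq Hqcount.
  destruct (Nat.lt_trichotomy q p) as [Hlt | [-> | Hlt]]; [exfalso | reflexivity | exfalso].
  - pose proof (count_ones_mono b (S q) p Hlt). rewrite count_ones_S, Hq in *. simpl in *. lia.
  - pose proof (count_ones_mono b (S p) q Hlt). rewrite count_ones_S, Hp in *. simpl in *. lia.
Qed.

Lemma nth_one b : inf_many_ones b -> forall i, exists p, b p = true /\ count_ones b p = i.
Proof.
  intros Hb.
  assert (Hbelow : forall N i, i < count_ones b N -> exists p, b p = true /\ count_ones b p = i).
  { induction N as [|N IH]; intros i Hi; simpl in Hi; [lia |].
    destruct (Nat.lt_ge_cases i (count_ones b N)) as [Hlt | Hge]; [exact (IH i Hlt) |].
    exists N. destruct (b N); simpl in Hi; [split; [reflexivity | lia] | lia]. }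
  assert (Hunbounded : forall k, exists N, k <= count_ones b N).
  { induction k as [|k [N HN]]; [exists 0; lia |].
    destruct (Hb N) as [p [Hp Hbp]]. exists (S p).
    rewrite count_ones_S, Hbp. pose proof (count_ones_mono b N p Hp). simpl. lia. }
  intros i. destruct (Hunbounded (S i)) as [N HN]. apply (Hbelow N). lia.
Qed.

Lemma count_ones_wcons b c p : count_ones (wcons b c) (S p) = bool_nat b + count_ones c p.
Proof.
  induction p as [|p IH]; [destruct b; reflexivity |].
  rewrite count_ones_S, IH, count_ones_S. simpl. lia.
Qed.

Definition negw (c : nat -> bool) : nat -> bool := fun i => negb (c i).

Definition xorw (e : bool) (c : nat -> bool) : nat -> bool := fun i => xorb (c i) e.

(* A leading 0 shifts all positions by one, so it flips every digit of rho. *)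
Lemma rho_wcons_false c : inf_many_ones c -> rho (wcons false c) = negw (rho c).
Proof.
  intros Hc. apply functional_extensionality; intros i.
  destruct (nth_one c Hc i) as [p [Hp Hcount]].
  unfold negw. rewrite (rho_spec c p i Hp Hcount).
  rewrite (rho_spec (wcons false c) (S p) i Hp) by (rewrite count_ones_wcons; exact Hcount).
  rewrite Nat.odd_succ, <- Nat.negb_odd. reflexivity.
Qed.

(* A leading 1 (in odd position 1) contributes a 0, then flips the rest. *)
Lemma rho_wcons_true c : inf_many_ones c -> rho (wcons true c) = wcons false (negw (rho c)).
Proof.
  intros Hc. apply functional_extensionality; intros [|i].
  - exact (rho_spec (wcons true c) 0 0 eq_refl eq_refl).
  - destruct (nth_one c Hc i) as [p [Hp Hcount]].
    simpl. unfold negw. rewrite (rho_spec c p i Hp Hcount).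
    rewrite (rho_spec (wcons true c) (S p) (S i) Hp)
      by (rewrite count_ones_wcons, Hcount; reflexivity).
    rewrite Nat.odd_succ, <- Nat.negb_odd. reflexivity.
Qed.

Definition wapp (u : list bool) (c : nat -> bool) : nat -> bool :=
  fun i => if i <? length u then nth i u false else c (i - length u).

Lemma wapp_nil c : wapp [] c = c.
Proof. apply functional_extensionality; intros i. unfold wapp; simpl. f_equal; lia. Qed.

Lemma wapp_cons b u c : wapp (b :: u) c = wcons b (wapp u c).
Proof. apply functional_extensionality; intros [|i]; reflexivity. Qed.

Lemma wapp_lt u c i : i < length u -> wapp u c i = nth i u false.
Proof. intros Hi; unfold wapp. apply Nat.ltb_lt in Hi. rewrite Hi. reflexivity. Qed.

Lemma wapp_ge u c i : wapp u c (length u + i) = c i.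
Proof.
  unfold wapp. destruct (Nat.ltb_spec (length u + i) (length u)); [lia |]. f_equal; lia.
Qed.

Lemma wapp_inf_many_ones u c : inf_many_ones c -> inf_many_ones (wapp u c).
Proof.
  intros Hc N. destruct (Hc N) as [k [Hk Hck]]. exists (length u + k).
  rewrite wapp_ge. split; [lia | exact Hck].
Qed.

Lemma wapp_inj u c c' : wapp u c = wapp u c' -> c = c'.
Proof.
  intros H. apply functional_extensionality; intros i.
  rewrite <- (wapp_ge u c i), <- (wapp_ge u c' i), H. reflexivity.
Qed.

Lemma negw_wapp u c : negw (wapp u c) = wapp (map negb u) (negw c).
Proof.
  apply functional_extensionality; intros i. unfold negw, wapp. rewrite length_map.
  destruct (Nat.ltb_spec i (length u)) as [Hi |]; [| reflexivity].
  rewrite (nth_indep (map negb u) false (negb false)) by (rewrite length_map; exact Hi).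
  rewrite map_nth. reflexivity.
Qed.

(* rho on finite words, so that rho acts on u ++ c as rhol u ++ (rho c, flipped
   when |u| is odd). *)
Fixpoint rhol (u : list bool) : list bool :=
  match u with
  | [] => []
  | false :: u => map negb (rhol u)
  | true :: u => false :: map negb (rhol u)
  end.

Lemma rho_wapp u : forall c, inf_many_ones c ->
  rho (wapp u c) = wapp (rhol u) (xorw (Nat.odd (length u)) (rho c)).
Proof.
  induction u as [|b u IH]; intros c Hc.
  - rewrite !wapp_nil. apply functional_extensionality; intros i.
    unfold xorw; simpl. symmetry; apply Bool.xorb_false_r.
  - assert (Hflip : negw (xorw (Nat.odd (length u)) (rho c))
                    = xorw (Nat.odd (length (b :: u))) (rho c)).
    { apply functional_extensionality; intros i. unfold negw, xorw. simpl length.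
      rewrite Nat.odd_succ, <- Nat.negb_odd.
      destruct (rho c i), (Nat.odd (length u)); reflexivity. }
    pose proof (wapp_inf_many_ones u c Hc) as Hinf.
    rewrite wapp_cons. destruct b.
    + rewrite rho_wcons_true, IH, negw_wapp, Hflip by assumption.
      simpl rhol. rewrite wapp_cons. reflexivity.
    + rewrite rho_wcons_false, IH, negw_wapp, Hflip by assumption. reflexivity.
Qed.

End RhoCombinatorics.

Section Preimages.
Local Close Scope R_scope.

(* The word whose digit pairs (2i, 2i+1) are (not x_i, x_i): each pair holds
   exactly one 1, placed at an odd position iff x_i = 1, so rho recovers x. *)
Definition pairs (x : nat -> bool) : nat -> bool :=
  fun i => if Nat.even i then negb (x (Nat.div2 i)) else x (Nat.div2 i).

Lemma pairs_even x i : pairs x (2 * i) = negb (x i).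
Proof. unfold pairs. rewrite Nat.even_mul, Nat.div2_double. reflexivity. Qed.

Lemma pairs_odd x i : pairs x (S (2 * i)) = x i.
Proof.
  unfold pairs. rewrite Nat.even_succ, Nat.odd_mul, Nat.div2_succ_double. reflexivity.
Qed.

Lemma count_ones_pairs x i : count_ones (pairs x) (2 * i) = i.
Proof.
  induction i as [|i IH]; [reflexivity |].
  replace (2 * S i) with (S (S (2 * i))) by lia.
  rewrite !count_ones_S, IH, pairs_odd, pairs_even. destruct (x i); simpl; lia.
Qed.

Lemma rho_pairs x : rho (pairs x) = x.
Proof.
  apply functional_extensionality; intros i. destruct (x i) eqn:Exi.
  - rewrite (rho_spec _ (S (2 * i)) i).
    + rewrite Nat.odd_succ, Nat.even_mul. reflexivity.
    + rewrite pairs_odd. exact Exi.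
    + rewrite count_ones_S, count_ones_pairs, pairs_even, Exi. simpl. lia.
  - rewrite (rho_spec _ (2 * i) i).
    + rewrite Nat.odd_mul. reflexivity.
    + rewrite pairs_even, Exi. reflexivity.
    + apply count_ones_pairs.
Qed.

Lemma pairs_inf_many_ones x : inf_many_ones (pairs x).
Proof.
  intros N. destruct (x N) eqn:ExN.
  - exists (S (2 * N)). rewrite pairs_odd. split; [lia | exact ExN].
  - exists (2 * N). rewrite pairs_even, ExN. split; [lia | reflexivity].
Qed.

Lemma pairs_inj x y : pairs x = pairs y -> x = y.
Proof.
  intros H. apply functional_extensionality; intros i.
  rewrite <- (pairs_odd x i), <- (pairs_odd y i), H. reflexivity.
Qed.

(* preimage n u c: a word such that n applications of rho carry u ++ preimage n u c
   to rhol^n(u) ++ c. *)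
Fixpoint preimage (n : nat) (u : list bool) (c : nat -> bool) : nat -> bool :=
  match n with
  | O => c
  | S n => pairs (xorw (Nat.odd (length u)) (preimage n (rhol u) c))
  end.

Lemma rho_preimage n u c :
  rho (wapp u (preimage (S n) u c)) = wapp (rhol u) (preimage n (rhol u) c).
Proof.
  simpl preimage. rewrite rho_wapp, rho_pairs by apply pairs_inf_many_ones. f_equal.
  apply functional_extensionality; intros i. unfold xorw.
  rewrite Bool.xorb_assoc, Bool.xorb_nilpotent. apply Bool.xorb_false_r.
Qed.

Lemma preimage_inj n : forall u c c', preimage n u c = preimage n u c' -> c = c'.
Proof.
  induction n as [|n IH]; simpl; intros u c c' H; [exact H |].
  apply pairs_inj in H. apply (IH (rhol u)).
  apply functional_extensionality; intros i.
  pose proof (f_equal (fun f => f i) H) as Hi. unfold xorw in Hi. simpl in Hi.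
  destruct (preimage n (rhol u) c i), (preimage n (rhol u) c' i), (Nat.odd (length u));
    simpl in Hi; congruence.
Qed.

Lemma preimage_local n : forall u c c' m,
  (forall k, k <= m -> c k = c' k) -> preimage n u c m = preimage n u c' m.
Proof.
  induction n as [|n IH]; simpl; intros u c c' m Hcc'; [apply Hcc'; lia |].
  unfold pairs, xorw. rewrite (IH (rhol u) c c' (Nat.div2 m)); [reflexivity |].
  intros k Hk. apply Hcc'. pose proof (Nat.div2_decr m m (Nat.le_succ_diag_r m)). lia.
Qed.

(* rhol never lengthens a word, and shortens a nonempty one within two steps:
   a leading 1 becomes a leading 0, which is then deleted. *)
Lemma rhol_length u : length (rhol u) <= length u.
Proof. induction u as [|[|] u IH]; simpl; rewrite ?length_map; lia. Qed.

Lemma rhol_rhol_shorter u : u <> [] -> length (rhol (rhol u)) < length u.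
Proof.
  destruct u as [|[|] u]; intros Hu; [congruence | |]; simpl;
    pose proof (rhol_length (map negb (rhol u))); pose proof (rhol_length u);
    rewrite ?length_map in *; lia.
Qed.

(* rhol loses a digit every two steps, so 2 |u| steps empty any finite word. *)
Lemma rhol_iter_nil L : forall u k, length u <= L -> 2 * length u <= k -> Nat.iter k rhol u = [].
Proof.
  assert (Hnil : forall k, Nat.iter k rhol [] = []).
  { induction k as [|k IH]; simpl; [reflexivity | rewrite IH; reflexivity]. }
  induction L as [|L IH]; intros u k HL Hk.
  - destruct u; simpl in HL; [apply Hnil | lia].
  - destruct u as [|b v]; [apply Hnil |].
    pose proof (rhol_rhol_shorter (b :: v) ltac:(discriminate)) as Hshort.
    destruct k as [|[|k]]; simpl length in *; [lia | lia |].
    rewrite !Nat.iter_succ_r. apply IH; simpl length in *; lia.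
Qed.

End Preimages.

Lemma Rmap_iter_preimage n : forall u c, inf_many_ones c ->
  Nat.iter n Rmap (val (wapp u (preimage n u c))) = val (wapp (Nat.iter n rhol u) c).
Proof.
  induction n as [|n IH]; intros u c Hc; [reflexivity |].
  rewrite !Nat.iter_succ_r, Rmap_val, rho_preimage by apply wapp_inf_many_ones, pairs_inf_many_ones.
  apply IH, Hc.
Qed.

Section Nested.
Variable w : nat -> list bool.
Hypothesis w_nonempty : forall j, w j <> [].

Lemma w_length_pos j : (1 <= length (w j))%nat.
Proof. destruct (w j) eqn:E; [contradiction (w_nonempty j E) | simpl; lia]. Qed.

(* Number of applications of R after which the prefix w_j has been consumed. *)
Definition pass_len (j : nat) : nat := 2 * length (w j).

(* The words Z_j = w_j ++ preimage (pass_len j) w_j Z_{j+1}.  As w_j is nonempty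
   and preimage is local, digit i of Z_j only involves digits < i of Z_{j+1};
   hence Z_j can be computed digit by digit, digit i with fuel i+1. *)
Fixpoint nested_fuel (fuel j i : nat) : bool :=
  match fuel with
  | O => false
  | S f => if (i <? length (w j))%nat then nth i (w j) false
           else preimage (pass_len j) (w j) (nested_fuel f (S j)) (i - length (w j))
  end.

Definition nested (j : nat) : nat -> bool := fun i => nested_fuel (S i) j i.

Lemma nested_fuel_enough i : forall f1 f2 j,
  (i < f1)%nat -> (i < f2)%nat -> nested_fuel f1 j i = nested_fuel f2 j i.
Proof.
  induction i as [i IH] using (well_founded_induction Wf_nat.lt_wf).
  intros [|f1] [|f2] j H1 H2; try lia. simpl.
  destruct (Nat.ltb_spec i (length (w j))); [reflexivity |].
  pose proof (w_length_pos j).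
  apply preimage_local. intros k Hk. apply IH; lia.
Qed.

Lemma nested_unfold j : nested j = wapp (w j) (preimage (pass_len j) (w j) (nested (S j))).
Proof.
  apply functional_extensionality; intros i. unfold nested at 1, wapp. simpl.
  destruct (Nat.ltb_spec i (length (w j))); [reflexivity |].
  pose proof (w_length_pos j).
  apply preimage_local. intros k Hk. apply nested_fuel_enough; lia.
Qed.

(* Z_j has infinitely many 1's, as its tail is a word of pairs. *)
Lemma nested_inf_many_ones j : inf_many_ones (nested j).
Proof.
  rewrite nested_unfold. apply wapp_inf_many_ones. unfold pass_len.
  pose proof (w_length_pos j).
  replace (2 * length (w j))%nat with (S (2 * length (w j) - 1)) by lia.
  apply pairs_inf_many_ones.
Qed.

Lemma nested_prefix j i : (i < length (w j))%nat -> nested j i = nth i (w j) false.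
Proof. intros Hi. rewrite nested_unfold. apply wapp_lt, Hi. Qed.

Lemma nested_step j : Nat.iter (pass_len j) Rmap (val (nested j)) = val (nested (S j)).
Proof.
  rewrite (nested_unfold j) at 1. rewrite Rmap_iter_preimage by apply nested_inf_many_ones.
  rewrite (rhol_iter_nil (length (w j))), wapp_nil by (unfold pass_len; lia).
  reflexivity.
Qed.

Fixpoint pass_time (j : nat) : nat :=
  match j with O => O | S j => pass_len j + pass_time j end.

Lemma orbit_nested j : Nat.iter (pass_time j) Rmap (val (nested 0)) = val (nested j).
Proof.
  induction j as [|j IH]; [reflexivity |].
  simpl pass_time. rewrite Nat.iter_add, IH. apply nested_step.
Qed.

End Nested.

Lemma nested_eq_upto w w' (Hw : forall j, w j <> []) (Hw' : forall j, w' j <> []) m :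
  (forall k, (k < m)%nat -> w k = w' k) -> nested w 0 = nested w' 0 -> nested w m = nested w' m.
Proof.
  induction m as [|m IH]; intros Hww' H0; [exact H0 |].
  assert (Hm : w m = w' m) by (apply Hww'; lia).
  assert (Heq : nested w m = nested w' m) by (apply IH; [intros k Hk; apply Hww'; lia | exact H0]).
  rewrite (nested_unfold w Hw m), (nested_unfold w' Hw' m) in Heq.
  unfold pass_len in Heq. rewrite Hm in Heq.
  apply wapp_inj, preimage_inj in Heq. exact Heq.
Qed.

Lemma approx_by_prefix y eps : 0 <= y <= 1 -> 0 < eps ->
  exists u : list bool, forall c,
    (forall i, (i < length u)%nat -> c i = nth i u false) -> Rabs (val c - y) < eps.
Proof.
  intros Hy Heps. destruct (pow2_inv_small eps Heps) as [K HK].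
  exists (map (greedy y) (seq 0 K)). intros c Hc.
  rewrite length_map, length_seq in Hc.
  rewrite <- (greedy_val y Hy).
  apply (Rle_lt_trans _ (/ 2 ^ K)); [| exact HK].
  apply val_agree. intros i Hi. rewrite (Hc i Hi).
  rewrite (nth_indep _ false (greedy y O)) by (rewrite length_map, length_seq; exact Hi).
  rewrite map_nth, seq_nth by exact Hi. reflexivity.
Qed.

(* An enumeration of all finite binary words, by the binary digits of
   positive numbers. *)
Fixpoint word_of_pos (p : positive) : list bool :=
  match p with
  | xH => []
  | xO p => false :: word_of_pos p
  | xI p => true :: word_of_pos p
  end.

Fixpoint pos_of_word (u : list bool) : positive :=
  match u with
  | [] => xH
  | false :: u => xO (pos_of_word u)
  | true :: u => xI (pos_of_word u)
  end.

Definition word_of_nat (k : nat) : list bool := word_of_pos (Pos.of_succ_nat k).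

Lemma word_of_nat_surj u : exists k, word_of_nat k = u.
Proof.
  exists (Nat.pred (Pos.to_nat (pos_of_word u))). unfold word_of_nat.
  rewrite (SuccNat2Pos.inv _ (pos_of_word u)).
  - induction u as [|[|] u IH]; simpl; rewrite ?IH; reflexivity.
  - pose proof (Pos2Nat.is_pos (pos_of_word u)). lia.
Qed.

(* The prefixes w_j used for the point with initial word p and code s: first p,
   then every finite word in turn, each followed by the bit s_j. *)
Definition target (p : list bool) (j : nat) : list bool :=
  match j with O => p | S k => word_of_nat k end.

Definition targets (p : list bool) (s : nat -> bool) (j : nat) : list bool :=
  target p j ++ [s j].

Lemma targets_nonempty p s j : targets p s j <> [].
Proof. unfold targets. intros H. apply app_eq_nil in H. destruct H; discriminate. Qed.

Definition point (p : list bool) (s : nat -> bool) : R := val (nested (targets p s) 0).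

Lemma nested_targets_prefix p s j i : (i < length (target p j))%nat ->
  nested (targets p s) j i = nth i (target p j) false.
Proof.
  intros Hi. rewrite nested_prefix by (apply targets_nonempty || (unfold targets; rewrite length_app; lia)).
  apply app_nth1, Hi.
Qed.

(* The orbit of every point p s reaches a point starting with any finite word. *)
Lemma point_orbit_dense p s : orbit_dense (point p s).
Proof.
  intros y Hy eps Heps. destruct (approx_by_prefix y eps Hy Heps) as [u Hu].
  destruct (word_of_nat_surj u) as [k Hk].
  exists (pass_time (targets p s) (S k)). unfold point.
  rewrite orbit_nested by apply targets_nonempty.
  apply Hu. intros i Hi. rewrite <- Hk in Hi |- *.
  exact (nested_targets_prefix p s (S k) i Hi).
Qed.

Lemma point_near y eps : 0 <= y <= 1 -> 0 < eps ->
  exists p, Rabs (point p (fun _ => false) - y) < eps.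
Proof.
  intros Hy Heps. destruct (approx_by_prefix y eps Hy Heps) as [u Hu].
  exists u. apply Hu. intros i Hi. exact (nested_targets_prefix u _ 0 i Hi).
Qed.

(* The code s is recovered from the point: bit s_j is the digit of Z_j right
   after target p j, and Z_j is determined by Z_0 and s_0, ..., s_{j-1}. *)
Lemma point_inj p s s' : point p s = point p s' -> s = s'.
Proof.
  intros Hpt.
  assert (H0 : nested (targets p s) 0 = nested (targets p s') 0)
    by (apply val_inj; [apply nested_inf_many_ones, targets_nonempty ..| exact Hpt]).
  apply functional_extensionality; intros j.
  induction j as [j IH] using (well_founded_induction Wf_nat.lt_wf).
  assert (Hj : nested (targets p s) j = nested (targets p s') j).
  { apply nested_eq_upto; [apply targets_nonempty .. | | exact H0].
    intros k Hk. unfold targets. rewrite (IH k Hk). reflexivity. }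
  pose proof (f_equal (fun c => c (length (target p j))) Hj) as Hdigit. simpl in Hdigit.
  rewrite !nested_prefix in Hdigit by (apply targets_nonempty || (unfold targets; rewrite length_app; simpl; lia)).
  unfold targets in Hdigit. rewrite !nth_middle in Hdigit. exact Hdigit.
Qed.

(* Cantor's diagonal argument: the image of an injection from infinite binary
   sequences is not covered by any sequence. *)
Lemma no_sequence_covers {A : Type} (g : (nat -> bool) -> A) (P : A -> Prop) :
  (forall s, P (g s)) -> (forall s s', g s = g s' -> s = s') ->
  ~ exists f : nat -> A, forall x, P x -> exists n, f n = x.
Proof.
  intros HP Hinj [f Hf].
  set (code n := epsilon (inhabits (fun _ : nat => false)) (fun s => g s = f n)).
  set (diag n := negb (code n n)).
  destruct (Hf (g diag) (HP diag)) as [n Hn].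
  assert (Hcode : g (code n) = f n) by (apply epsilon_spec; exists diag; symmetry; exact Hn).
  pose proof (f_equal (fun s => s n) (Hinj _ _ (eq_trans Hcode Hn))) as Hbit.
  unfold diag in Hbit. simpl in Hbit. destruct (code n n); discriminate.
Qed.

Theorem proposition6p7 :
  (~ exists f : nat -> R,
        forall x : R, 0 <= x <= 1 -> orbit_dense x -> exists n : nat, f n = x)
  /\
  (forall y : R, 0 <= y <= 1 -> forall eps : R, 0 < eps ->
     exists x : R, 0 <= x <= 1 /\ orbit_dense x /\ Rabs (x - y) < eps).
Proof.
  split.
  - intros [f Hf].
    apply (no_sequence_covers (point []) (fun x => 0 <= x <= 1 /\ orbit_dense x)).
    + intros s. split; [apply val_bounds | apply point_orbit_dense].
    + apply point_inj.
    + exists f. intros x [Hx Hdense]. exact (Hf x Hx Hdense).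
  - intros y Hy eps Heps. destruct (point_near y eps Hy Heps) as [p Hp].
    exists (point p (fun _ => false)).
    split; [apply val_bounds | split; [apply point_orbit_dense | exact Hp]].
Qed.
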